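(* Let $\mathcal M=\{M^{(\lambda)}:\lambda\in\mathbb R_{>0}\}$ be a quasianalytic weight matrix. Then there exists a quasianalytic weight sequence $L$ such that $M^{(\lambda)}\vartriangleleft L$ for all $\lambda\in\mathbb R_{>0}$; in particular $\mathcal E_{\{\mathcal M\}}(U)\subseteq\mathcal E_{(L)}(U)$ for every non-empty open $U\subseteq\mathbb R^r$.
   Context: For a sequence $M=(M_p)_{p\in\mathbb N}$ of positive reals write $m_p:=M_p/p!$. $M$ is a weight sequence if $1=M_0\le M_1$, $M_p^2\le M_{p-1}M_{p+1}$ for all $p\ge1$, and $\liminf_{p\to\infty}m_p^{1/p}>0$; it is quasianalytic if $\sum_{p\ge1}M_{p-1}/M_p=+\infty$. A weight matrix is a family $\mathcal M=\{M^{(\lambda)}:\lambda\in\mathbb R_{>0}\}$ of weight sequences with $M^{(\lambda)}_p\le M^{(\kappa)}_p$ for all $p$ whenever $\lambda\le\kappa$; it is quasianalytic if every $M^{(\lambda)}$ is quasianalytic. For sequences $M,N$: $M\vartriangleleft N$ means $\lim_{p\to\infty}(M_p/N_p)^{1/p}=0$. For $U\subseteq\mathbb R^r$ open, $K\subseteq U$ compact, $h>0$: $\|f\|^M_{K,h}:=\sup_{\alpha\in\mathbb N^r,x\in K}|\partial^\alpha f(x)|/(h^{|\alpha|}M_{|\alpha|})$. $\mathcal E_{(L)}(U)$ consists of smooth $f$ with $\|f\|^L_{K,h}<\infty$ for all compact $K\subseteq U$ and all $h>0$. $\mathcal E_{\{\mathcal M\}}(U)$ consists of smooth $f$ such that for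 every compact $K\subseteq U$ there exist $\lambda>0$ and $h>0$ with $\|f\|^{M^{(\lambda)}}_{K,h}<\infty$. *)

From Stdlib Require Import Reals Factorial.
From mathcomp Require Import all_boot.

Open Scope R_scope.

Definition small_m (M : nat -> R) (p : nat) : R := M p / INR (Factorial.fact p).

(* Weight sequence: positive, 1 = M_0 <= M_1, log-convex,
   liminf_{p -> oo} m_p^{1/p} > 0 (written out: there are c > 0 and N with
   m_p^{1/p} >= c for all p >= N). *)
Definition weight_sequence (M : nat -> R) : Prop :=
  (forall p, 0 < M p) /\
  M 0%nat = 1 /\ M 0%nat <= M 1%nat /\
  (forall p, (1 <= p)%nat -> M p ^ 2 <= M (p - 1)%nat * M (p + 1)%nat) /\
  (exists c, 0 < c /\ exists N, forall p, (N <= p)%nat -> (1 <= p)%nat ->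
       c <= Rpower (small_m M p) (/ INR p)).

(* Quasianalytic: sum_{p>=1} M_{p-1}/M_p = +oo (partial sums unbounded). *)
Definition quasianalytic (M : nat -> R) : Prop :=
  forall B : R, exists n : nat,
    B < sum_f_R0 (fun k => M k / M (S k)) n.

Definition weight_matrix (MM : R -> nat -> R) : Prop :=
  (forall lam, 0 < lam -> weight_sequence (MM lam)) /\
  (forall lam kap, 0 < lam -> lam <= kap -> forall p, MM lam p <= MM kap p).

Definition quasianalytic_matrix (MM : R -> nat -> R) : Prop :=
  forall lam, 0 < lam -> quasianalytic (MM lam).

Definition lhd (M N : nat -> R) : Prop :=
  Un_cv (fun p => Rpower (M p / N p) (/ INR p)) 0.

Definition vec (r : nat) := 'I_r -> R.

Definition open_vec {r : nat} (U : vec r -> Prop) : Prop :=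
  forall x, U x -> exists eps, 0 < eps /\
    forall y : vec r, (forall i, Rabs (y i - x i) < eps) -> U y.

(* compact in R^r = closed and bounded (Heine-Borel) *)
Definition compact_vec {r : nat} (K : vec r -> Prop) : Prop :=
  (exists B, forall x, K x -> forall i, Rabs (x i) <= B) /\
  (forall (u : nat -> vec r) (x : vec r),
      (forall n, K (u n)) -> (forall i, Un_cv (fun n => u n i) (x i)) -> K x).

Definition shift {r : nat} (x : vec r) (i : 'I_r) (t : R) : vec r :=
  fun j => if j == i then x j + t else x j.

Definition multi_index (r : nat) := 'I_r -> nat.

Definition mi_abs {r : nat} (a : multi_index r) : nat := (\sum_(i < r) a i)%N.

Definition mi_incr {r : nat} (a : multi_index r) (i : 'I_r) : multi_index r :=
  fun j => if j == i then S (a j) else a j.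

Definition continuous_at_vec {r : nat} (g : vec r -> R) (x : vec r) : Prop :=
  forall eps, 0 < eps -> exists del, 0 < del /\
    forall y : vec r, (forall i, Rabs (y i - x i) < del) -> Rabs (g y - g x) < eps.

(* D is the family of partial derivatives (D a = d^a f) of a smooth f on U:
   D 0 = f on U, every D a is continuous on U, and
   D (a + e_i) is the i-th partial derivative of D a on U. *)
Definition deriv_family {r : nat} (U : vec r -> Prop) (f : vec r -> R)
    (D : multi_index r -> vec r -> R) : Prop :=
  (forall x, U x -> D (fun _ => 0%nat) x = f x) /\
  (forall a x, U x -> continuous_at_vec (D a) x) /\
  (forall a i x, U x ->
      derivable_pt_lim (fun t => D a (shift x i t)) 0 (D (mi_incr a i) x)).

Definition smooth {r : nat} (U : vec r -> Prop) (f : vec r -> R) : Prop :=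
  exists D, deriv_family U f D.

Definition seminorm_finite {r : nat} (M : nat -> R) (D : multi_index r -> vec r -> R)
    (K : vec r -> Prop) (h : R) : Prop :=
  exists C, forall (a : multi_index r) x, K x ->
    Rabs (D a x) / (h ^ (mi_abs a) * M (mi_abs a)) <= C.

Definition E_beurling {r : nat} (L : nat -> R) (U : vec r -> Prop) (f : vec r -> R) : Prop :=
  exists D, deriv_family U f D /\
    forall K, compact_vec K -> (forall x, K x -> U x) ->
      forall h, 0 < h -> seminorm_finite L D K h.

Definition E_roumieu_matrix {r : nat} (MM : R -> nat -> R) (U : vec r -> Prop)
    (f : vec r -> R) : Prop :=
  exists D, deriv_family U f D /\
    forall K, compact_vec K -> (forall x, K x -> U x) ->
      exists lam h, 0 < lam /\ 0 < h /\ seminorm_finite (MM lam) D K h.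

From Stdlib Require Import Reals Lra Lia ClassicalEpsilon.
From mathcomp Require Import all_boot zify.
Open Scope R_scope.

(* Replacing M^(j+1) by B_j(k) := (j+1)^k M^(j+1)_k preserves quasianalytic
   weight sequences, so it suffices to find a quasianalytic weight sequence L
   with L_k >= B_j(k) for large k, for every j.  Then
   (M^(lam)_k / L_k)^(1/k) <= 1/(j+1) eventually, i.e. M^(lam) <| L, and the
   seminorms of L with any h > 0 are controlled by those of M^(lam) with a fixed
   h0, because (h0/h)^k M^(lam)_k / L_k is bounded.

   L is given by its quotients rho_k = L_(k+1) / L_k, chosen >= 1 and
   nondecreasing (which is log-convexity).  The indices are cut into
   consecutive blocks and on block j we take
   rho_k = max (Lambda_j, B_j(k+1) / B_j(k)).  As B_j is quasianalytic, block j
   can be made so long that the sum of 1/rho_k over it is at least 1; hence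
   sum 1/rho_k diverges and L is quasianalytic.  Inside block j the bound
   rho_k >= B_j(k+1) / B_j(k) propagates L_k >= B_j(k), which the constant
   Lambda_j enforces at the first index of the block. *)


Definition quot (M : nat -> R) (k : nat) : R := M k.+1 / M k.

Lemma weight_seq_pos {M} : weight_sequence M -> forall p, 0 < M p.
Proof. by case. Qed.

Section WeightSequence.
Context {M : nat -> R} (HM : weight_sequence M).

Let M_pos := weight_seq_pos HM.

Lemma quot_mul k : M k * quot M k = M k.+1.
Proof. by rewrite /quot; field; have := M_pos k; lra. Qed.

Lemma quot_nondecr k : quot M k <= quot M k.+1.
Proof.
have [_ [_ [_ [log_convex _]]]] := HM.
have := log_convex k.+1 (ltn0Sn k); rewrite subSS subn0 addn1 => Hk.
have := M_pos k; have := M_pos k.+1; have := M_pos k.+2 => *.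
apply: (Rmult_le_reg_r (M k * M k.+1)); first nra.
rewrite /quot; replace (M k.+1 / M k * (M k * M k.+1)) with (M k.+1 ^ 2) by (field; lra).
by replace (M k.+2 / M k.+1 * (M k * M k.+1)) with (M k * M k.+2) by (field; lra).
Qed.

Lemma quot_ge1 k : 1 <= quot M k.
Proof.
elim: k => [|k IH]; last by have := quot_nondecr k; lra.
have [_ [M0 [M01 _]]] := HM.
by rewrite /quot M0 Rdiv_1_r; lra.
Qed.

Lemma weight_seq_ge1 k : 1 <= M k.
Proof.
elim: k => [|k IH]; first by have [_ [M0 _]] := HM; lra.
by rewrite -quot_mul; have := quot_ge1 k; nra.
Qed.

Lemma weight_seq_nondecr k l : (k <= l)%N -> M k <= M l.
Proof.
apply: (homo_leq Rle_refl (fun y x z => Rle_trans x y z)) => i.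
by rewrite -quot_mul; have := quot_ge1 i; have := M_pos i; nra.
Qed.

Lemma quot_le k : quot M k <= M k.+1.
Proof. by rewrite -quot_mul; have := quot_ge1 k; have := weight_seq_ge1 k; nra. Qed.

End WeightSequence.

Lemma weight_sequence_of_ge M L :
  weight_sequence M -> (forall p, M p <= L p) ->
  L 0%N = 1 -> 1 <= L 1%N ->
  (forall p, (1 <= p)%N -> L p ^ 2 <= L (p - 1)%N * L (p + 1)%N) ->
  weight_sequence L.
Proof.
move=> HM MleL L0 L1 log_convex.
have M_pos := weight_seq_pos HM.
have L_pos p : 0 < L p by have := M_pos p; have := MleL p; lra.
split; first exact: L_pos.
split; first exact: L0.
split; first lra.
split; first exact: log_convex.
have [_ [_ [_ [_ [c [c_pos [N HN]]]]]]] := HM.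
exists c; split; first exact: c_pos.
exists N => p HNp Hp; apply: (Rle_trans _ _ _ (HN p HNp Hp)).
apply: Rle_Rpower_l; first by apply/Rlt_le/Rinv_0_lt_compat/lt_0_INR; lia.
have fact_pos := INR_fact_lt_0 p.
split; first by apply: Rdiv_lt_0_compat.
by apply: Rmult_le_compat_r; [apply/Rlt_le/Rinv_0_lt_compat | apply: MleL].
Qed.

Lemma weight_sequence_scale M c :
  weight_sequence M -> 1 <= c -> weight_sequence (fun p => c ^ p * M p).
Proof.
move=> HM c_ge1.
have M_pos := weight_seq_pos HM; have M_ge1 := weight_seq_ge1 HM.
have [_ [M0 [_ [log_convex _]]]] := HM.
apply: (weight_sequence_of_ge _ _ HM).
- by move=> p; have := pow_R1_Rle c p c_ge1; have := M_pos p; nra.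
- by rewrite /= M0; ring.
- by have := M_ge1 1%N; rewrite /=; nra.
case=> [|p] // _; have := log_convex p.+1 (ltn0Sn p); rewrite subSS subn0 addn1 => Hp.
replace ((c ^ p.+1 * M p.+1) ^ 2) with ((c ^ p.+1) ^ 2 * M p.+1 ^ 2) by ring.
replace (c ^ p * M p * (c ^ p.+2 * M p.+2))
  with ((c ^ p.+1) ^ 2 * (M p * M p.+2)) by (rewrite /=; ring).
by apply: Rmult_le_compat_l; [apply: pow2_ge_0 | lra].
Qed.

Definition divergent (g : nat -> R) : Prop := forall C, exists n, C < sum_f_R0 g n.

Lemma divergent_le g h : (forall k, g k <= h k) -> divergent g -> divergent h.
Proof.
move=> gh Hg C; have [n Hn] := Hg C; exists n.
by have := sum_growing g h n gh; lra.
Qed.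

Lemma divergent_scal g c : 0 < c -> divergent g -> divergent (fun k => g k * c).
Proof.
move=> c_pos Hg C; have [n Hn] := Hg (C / c); exists n.
rewrite -scal_sum; replace C with (c * (C / c)) by (field; lra).
exact: Rmult_lt_compat_l.
Qed.

Lemma sum_f_R0_nondecr g m n :
  (forall k, 0 <= g k) -> (m <= n)%N -> sum_f_R0 g m <= sum_f_R0 g n.
Proof.
move=> g_ge0; apply: (homo_leq Rle_refl (fun y x z => Rle_trans x y z)) => i.
by rewrite tech5; have := g_ge0 i.+1; lra.
Qed.

Lemma term_le_sum_f_R0 g k n :
  (forall i, 0 <= g i) -> (k <= n)%N -> g k <= sum_f_R0 g n.
Proof.
move=> g_ge0 kn; apply: (Rle_trans _ (sum_f_R0 g k)); last exact: sum_f_R0_nondecr.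
case: k {kn} => [|k] /=; first lra.
by have := cond_pos_sum g k g_ge0; lra.
Qed.

Lemma sum_f_R0_diff_ext g h m n : (m <= n)%N ->
  (forall k, (m < k <= n)%N -> g k = h k) ->
  sum_f_R0 g n - sum_f_R0 g m = sum_f_R0 h n - sum_f_R0 h m.
Proof.
elim: n => [|n IH]; first by rewrite leqn0 => /eqP -> _; ring.
rewrite leq_eqVlt ltnS => /orP [/eqP -> _ | mn gh]; first ring.
have gh_n : g n.+1 = h n.+1 by apply: gh; lia.
have := IH mn (fun k Hk => gh k ltac:(lia)).
by rewrite !tech5 gh_n; lra.
Qed.

Lemma divergent_block_sum g : (forall k, 0 <= g k) -> divergent g ->
  forall m, exists n, (m < n)%N /\ 1 <= sum_f_R0 g n - sum_f_R0 g m.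
Proof.
move=> g_ge0 Hg m; have [n Hn] := Hg (sum_f_R0 g m + 1); exists n; split; last lra.
by rewrite ltnNge; apply/negP => nm; have := sum_f_R0_nondecr _ _ _ g_ge0 nm; lra.
Qed.

Lemma quasianalytic_scale M c : (forall p, 0 < M p) -> 0 < c ->
  quasianalytic M -> quasianalytic (fun p => c ^ p * M p).
Proof.
move=> M_pos c_pos HQ.
apply: (divergent_le _ _ _ (divergent_scal _ _ (Rinv_0_lt_compat _ c_pos) HQ)) => k /=.
have := pow_lt c k c_pos; have := M_pos k.+1 => *.
by right; field; repeat split; lra.
Qed.

Fixpoint prod_quot (rho : nat -> R) (p : nat) : R :=
  if p is q.+1 then prod_quot rho q * rho q else 1.

Section ProdQuot.
Context (rho : nat -> R) (rho_ge1 : forall k, 1 <= rho k).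

Lemma prod_quot_ge1 p : 1 <= prod_quot rho p.
Proof. by elim: p => [|p IH] /=; [lra | have := rho_ge1 p; nra]. Qed.

Lemma prod_quot_log_convex : (forall k, rho k <= rho k.+1) ->
  forall p, (1 <= p)%N ->
  prod_quot rho p ^ 2 <= prod_quot rho (p - 1) * prod_quot rho (p + 1).
Proof.
move=> rho_nondecr; case => [|p] // _; rewrite subSS subn0 addn1 /=.
have := prod_quot_ge1 p; have := rho_ge1 p; have := rho_nondecr p => rho_le rho_p P_ge1.
have Pr_ge0 : 0 <= prod_quot rho p * prod_quot rho p * rho p by nra.
have := Rmult_le_compat_l _ _ _ Pr_ge0 rho_le; nra.
Qed.

Lemma quasianalytic_prod_quot :
  divergent (fun k => / rho k) -> quasianalytic (prod_quot rho).
Proof.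
apply: divergent_le => k /=; right.
by have := prod_quot_ge1 k; have := rho_ge1 k => *; field; lra.
Qed.

End ProdQuot.

Section DominatingSequence.
Context (B : nat -> nat -> R)
  (B_weight : forall j, weight_sequence (B j))
  (B_quasi : forall j, quasianalytic (B j))
  (B_incr : forall j k, B j k <= B j.+1 k).

Lemma family_le j i k l : (j <= i)%N -> (k <= l)%N -> B j k <= B i l.
Proof.
move=> ji kl; apply: (Rle_trans _ (B j l)); first exact: weight_seq_nondecr.
exact: (homo_leq Rle_refl (fun y x z => Rle_trans x y z) (fun i => B_incr i l)).
Qed.

(* For m = breakpoint j, block_term j m k is 1 / dominating_quot k on block j. *)
Definition block_term j m k := / Rmax (B j (m + 2)) (quot (B j) k).

Lemma block_end_exists j m : exists n, (m < n)%N /\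
  1 <= sum_f_R0 (block_term j m) n - sum_f_R0 (block_term j m) m.
Proof.
have Lam_ge1 := weight_seq_ge1 (B_weight j) (m + 2).
set Lam := B j (m + 2) in Lam_ge1 *.
have max_pos k : 0 < Rmax Lam (quot (B j) k).
  by have := Rmax_l Lam (quot (B j) k); lra.
apply: divergent_block_sum => [k|]; first exact/Rlt_le/Rinv_0_lt_compat.
apply: (divergent_le _ _ _ (divergent_scal _ _ (Rinv_0_lt_compat Lam _) (B_quasi j)))
  => [k|]; last lra.
have := quot_ge1 (B_weight j) k; have := weight_seq_pos (B_weight j) k.
have := weight_seq_pos (B_weight j) k.+1 => *.
rewrite /block_term -/Lam.
replace (B j k / B j k.+1 * / Lam) with (/ (Lam * quot (B j) k))
  by (rewrite /quot; field; repeat split; lra).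
apply: Rinv_le_contravar; first exact: max_pos.
by apply: Rmax_lub; nra.
Qed.

Definition block_end j m : nat :=
  proj1_sig (constructive_indefinite_description _ (block_end_exists j m)).

Lemma block_endP j m : (m < block_end j m)%N /\
  1 <= sum_f_R0 (block_term j m) (block_end j m) - sum_f_R0 (block_term j m) m.
Proof.
exact: proj2_sig (constructive_indefinite_description _ (block_end_exists j m)).
Qed.

Fixpoint breakpoint j : nat := if j is i.+1 then block_end i (breakpoint i) else 0.

Lemma breakpoint_lt j : (breakpoint j < breakpoint j.+1)%N.
Proof. exact: (proj1 (block_endP j (breakpoint j))). Qed.

Lemma breakpoint_mono : {homo breakpoint : i j / (i <= j)%N}.
Proof. exact: ltnW_homo (homo_ltn ltn_trans breakpoint_lt). Qed.

Lemma breakpoint_ge j : (j <= breakpoint j)%N.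
Proof. by elim: j => [|j IH] //; have := breakpoint_lt j; lia. Qed.

(* Block j consists of the k with breakpoint j < k <= breakpoint j.+1; block 0
   also contains 0. *)
Lemma block_exists k : exists j, (k <= breakpoint j.+1)%N.
Proof. by exists k; have := breakpoint_ge k.+1; lia. Qed.

Definition block k : nat := ex_minn (block_exists k).

Lemma le_breakpoint_block k : (k <= breakpoint (block k).+1)%N.
Proof. by rewrite /block; case: ex_minnP. Qed.

Lemma block_le j k : (k <= breakpoint j.+1)%N -> (block k <= j)%N.
Proof. by rewrite /block; case: ex_minnP => b _ minb /minb. Qed.

Lemma block_ge j k : (breakpoint j < k)%N -> (j <= block k)%N.
Proof.
move=> jk; rewrite leqNgt; apply/negP => /breakpoint_mono.
by have := le_breakpoint_block k; lia.
Qed.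

Lemma breakpoint_block_le k : (breakpoint (block k) <= k)%N.
Proof.
case E: (block k) => [|b] //; rewrite leqNgt; apply/negP => /ltnW /block_le.
by rewrite E ltnn.
Qed.

Lemma block_eq j k : (breakpoint j < k <= breakpoint j.+1)%N -> block k = j.
Proof. by move=> /andP [lo hi]; apply/eqP; rewrite eqn_leq block_le ?block_ge. Qed.

Lemma block_S k :
  (k < breakpoint (block k).+1)%N /\ block k.+1 = block k \/
  k = breakpoint (block k).+1 /\ block k.+1 = (block k).+1.
Proof.
have lo := breakpoint_block_le k.
move: (le_breakpoint_block k); rewrite leq_eqVlt => /orP [/eqP E | lt].
- right; split => //; apply: block_eq; rewrite -E.
  by have := breakpoint_lt (block k).+1; lia.
- by left; split => //; apply: block_eq; lia.
Qed.

(* Lambda_j: it lifts L above B_j at the first index of block j and keeps the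
   quotients nondecreasing when entering the block. *)
Definition threshold j := B j (breakpoint j + 2).

Definition dominating_quot k := Rmax (threshold (block k)) (quot (B (block k)) k).

Lemma dominating_quot_ge1 k : 1 <= dominating_quot k.
Proof.
have := quot_ge1 (B_weight (block k)) k.
have := Rmax_r (threshold (block k)) (quot (B (block k)) k).
by rewrite /dominating_quot; lra.
Qed.

Lemma dominating_quot_nondecr k : dominating_quot k <= dominating_quot k.+1.
Proof.
have lo := breakpoint_block_le k; rewrite /dominating_quot.
case: (block_S k) => [[_ ->] | [Ek ->]].
  by apply: Rle_max_compat_l; apply: quot_nondecr.
apply: Rle_trans (Rmax_l _ _); rewrite /threshold -Ek; apply: Rmax_lub.
  by apply: family_le; lia.
apply: Rle_trans (quot_le (B_weight _) k) _.
by apply: family_le; lia.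
Qed.

Definition dominating_seq := prod_quot dominating_quot.

Lemma dominating_seq_ge_block k : B (block k) k.+1 <= dominating_seq k.+1.
Proof.
elim: k => [|k IH].
  rewrite /dominating_seq /= /dominating_quot Rmult_1_l.
  apply: Rle_trans (Rmax_r _ _); right.
  by have [_ [B0 _]] := B_weight (block 0); rewrite /quot B0 Rdiv_1_r.
have seq_ge1 : 1 <= dominating_seq k.+1 := prod_quot_ge1 _ dominating_quot_ge1 k.+1.
change (dominating_seq k.+2) with (dominating_seq k.+1 * dominating_quot k.+1).
rewrite /dominating_quot.
case: (block_S k) => [[_ E] | [Ek E]]; rewrite E.
- rewrite -(quot_mul (B_weight (block k)) k.+1).
  have := Rmax_r (threshold (block k)) (quot (B (block k)) k.+1).
  have := quot_ge1 (B_weight (block k)) k.+1.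
  by have := weight_seq_pos (B_weight (block k)) k.+1 => *; nra.
- have := Rmax_l (threshold (block k).+1) (quot (B (block k).+1) k.+1).
  have := weight_seq_ge1 (B_weight (block k).+1) (breakpoint (block k).+1 + 2).
  rewrite /threshold -Ek addn2 => *; nra.
Qed.

Lemma sum_inv_dominating_quot_ge j :
  INR j <= sum_f_R0 (fun k => / dominating_quot k) (breakpoint j).
Proof.
have inv_quot_ge0 k : 0 <= / dominating_quot k.
  by apply/Rlt_le/Rinv_0_lt_compat; have := dominating_quot_ge1 k; lra.
elim: j => [|j IH]; first exact: cond_pos_sum.
have [_ block_sum] := block_endP j (breakpoint j).
have quot_block k : (breakpoint j < k <= breakpoint j.+1)%N ->
    / dominating_quot k = block_term j (breakpoint j) k.
  by move=> /block_eq Hk; rewrite /dominating_quot Hk.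
have := sum_f_R0_diff_ext _ _ _ _ (ltnW (breakpoint_lt j)) quot_block.
by rewrite S_INR /=; lra.
Qed.

Lemma weight_sequence_dominating_seq : weight_sequence dominating_seq.
Proof.
apply: (weight_sequence_of_ge _ _ (B_weight 0)) => //.
- case=> [|k]; first by have [_ [-> _]] := B_weight 0; right.
  by apply: Rle_trans (dominating_seq_ge_block k); apply: family_le.
- exact: (prod_quot_ge1 _ dominating_quot_ge1 1).
- exact: (prod_quot_log_convex _ dominating_quot_ge1 dominating_quot_nondecr).
Qed.

Lemma quasianalytic_dominating_seq : quasianalytic dominating_seq.
Proof.
apply: (quasianalytic_prod_quot _ dominating_quot_ge1) => C.
have [j Hj] := INR_unbounded C; exists (breakpoint j).
by have := sum_inv_dominating_quot_ge j; lra.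
Qed.

Lemma quasianalytic_dominating_sequence : exists L : nat -> R,
  weight_sequence L /\ quasianalytic L /\
  forall j, exists K, forall k, (K <= k)%N -> B j k <= L k.
Proof.
exists dominating_seq; split; first exact: weight_sequence_dominating_seq.
split; first exact: quasianalytic_dominating_seq.
move=> j; exists (breakpoint j).+2; case=> [|k] // Hk.
by apply: Rle_trans (dominating_seq_ge_block k); apply: family_le => //; apply: block_ge.
Qed.

End DominatingSequence.

Lemma Rpower_pos x y : 0 < Rpower x y.
Proof. exact: exp_pos. Qed.

Lemma Rpower_pow_root x k : 0 < x -> (0 < k)%N -> Rpower (x ^ k) (/ INR k) = x.
Proof.
move=> x_pos k_pos; have k_neq0 : INR k <> 0 by apply: not_0_INR; lia.
by rewrite -Rpower_pow // Rpower_mult Rinv_r // Rpower_1.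
Qed.

Lemma Rpower_root_pow x k : 0 < x -> (0 < k)%N -> Rpower x (/ INR k) ^ k = x.
Proof.
move=> x_pos k_pos; have k_neq0 : INR k <> 0 by apply: not_0_INR; lia.
by rewrite -Rpower_pow ?Rpower_mult ?Rinv_l ?Rpower_1 //; apply: Rpower_pos.
Qed.

Lemma lhd_of_dominated M L : (forall p, 0 < M p) ->
  (forall c, 0 < c -> exists K, forall k, (K <= k)%N -> c ^ k * M k <= L k) ->
  lhd M L.
Proof.
move=> M_pos dom eps eps_pos.
have [K HK] := dom (2 / eps) ltac:(apply: Rdiv_lt_0_compat; lra).
exists K.+1 => k Hk; rewrite /R_dist Rminus_0_r Rabs_pos_eq; last exact/Rlt_le/Rpower_pos.
have k_pos : (0 < k)%N by lia.
have dom_k := HK k ltac:(lia); have Mk := M_pos k.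
have ck_pos : 0 < (2 / eps) ^ k by apply: pow_lt; apply: Rdiv_lt_0_compat; lra.
have ek_pos : 0 < (eps / 2) ^ k by apply: pow_lt; lra.
have inv_ck : (eps / 2) ^ k * (2 / eps) ^ k = 1.
  by rewrite -Rpow_mult_distr -(pow1 k); congr pow; field; lra.
have ratio_le : M k / L k <= (eps / 2) ^ k.
  apply: (Rmult_le_reg_r (L k)); first nra.
  rewrite /Rdiv Rmult_assoc Rinv_l; last nra.
  nra.
apply: (Rle_lt_trans _ (eps / 2)); last lra.
rewrite -(Rpower_pow_root (eps / 2) k) //; last lra.
apply: Rle_Rpower_l; first by apply/Rlt_le/Rinv_0_lt_compat/lt_0_INR; lia.
by split; first by apply: Rdiv_lt_0_compat; nra.
Qed.

Lemma lhd_scaled_bounded M L t : (forall p, 0 < M p) -> (forall p, 0 < L p) ->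
  lhd M L -> 0 < t -> exists C, forall q, t ^ q * (M q / L q) <= C.
Proof.
move=> M_pos L_pos HML t_pos.
pose s q := t ^ q * (M q / L q).
have s_ge0 q : 0 <= s q.
  by apply: Rmult_le_pos; [apply: pow_le | apply/Rlt_le/Rdiv_lt_0_compat]; auto; lra.
have [N HN] := HML (/ t) (Rinv_0_lt_compat _ t_pos).
exists (1 + sum_f_R0 s N.+1) => q; rewrite -/(s q).
have := cond_pos_sum s N.+1 s_ge0.
case: (leqP q N.+1) => [qN | Nq].
  by have := term_le_sum_f_R0 _ _ _ s_ge0 qN; lra.
have q_pos : (0 < q)%N by lia.
have ratio_pos : 0 < M q / L q by apply: Rdiv_lt_0_compat.
set y := Rpower (M q / L q) (/ INR q).
have y_pos : 0 < y by apply: Rpower_pos.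
have y_lt : y < / t.
  have := HN q ltac:(lia); rewrite -/y /R_dist Rminus_0_r Rabs_pos_eq; lra.
have -> : s q = (t * y) ^ q by rewrite Rpow_mult_distr /y Rpower_root_pow.
have ty_le1 : t * y <= 1.
  by have := Rmult_lt_compat_l t _ _ t_pos y_lt; rewrite Rinv_r; lra.
by have := pow_incr (t * y) 1 q ltac:(split; nra); rewrite pow1; lra.
Qed.

Lemma seminorm_finite_of_lhd {r : nat} M L (D : multi_index r -> vec r -> R) K h0 h :
  (forall p, 0 < M p) -> (forall p, 0 < L p) -> lhd M L -> 0 < h0 -> 0 < h ->
  seminorm_finite M D K h0 -> seminorm_finite L D K h.
Proof.
move=> M_pos L_pos HML h0_pos h_pos [C HC].
have [Cs HCs] :=
  lhd_scaled_bounded _ _ _ M_pos L_pos HML (Rdiv_lt_0_compat _ _ h0_pos h_pos).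
exists (Rmax C 0 * Cs) => a x Kx; set q := mi_abs a.
have Ha := HC a x Kx; rewrite -/q in Ha.
have := pow_lt h q h_pos; have := pow_lt h0 q h0_pos.
have := M_pos q; have := L_pos q => Lq Mq h0q hq.
have -> : Rabs (D a x) / (h ^ q * L q) =
    Rabs (D a x) / (h0 ^ q * M q) * ((h0 / h) ^ q * (M q / L q)).
  by rewrite /Rdiv Rpow_mult_distr pow_inv; field; lra.
apply: Rmult_le_compat.
- by apply: Rmult_le_pos; [apply: Rabs_pos | apply/Rlt_le/Rinv_0_lt_compat; nra].
- apply: Rmult_le_pos; first by apply: pow_le; apply/Rlt_le/Rdiv_lt_0_compat.
  by apply/Rlt_le/Rdiv_lt_0_compat.
- exact: Rle_trans Ha (Rmax_l _ _).
- exact: HCs.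
Qed.

Lemma E_roumieu_matrix_sub_beurling {r : nat} (MM : R -> nat -> R) L
    (U : vec r -> Prop) f :
  (forall lam, 0 < lam -> forall p, 0 < MM lam p) -> (forall p, 0 < L p) ->
  (forall lam, 0 < lam -> lhd (MM lam) L) ->
  E_roumieu_matrix MM U f -> E_beurling L U f.
Proof.
move=> MM_pos L_pos HML [D [HD HK]]; exists D; split => // K K_compact KU h h_pos.
have [lam [h0 [lam_pos [h0_pos HKh0]]]] := HK K K_compact KU.
exact: (seminorm_finite_of_lhd _ _ _ _ _ _
  (MM_pos lam lam_pos) L_pos (HML lam lam_pos) h0_pos h_pos HKh0).
Qed.

Definition scaled_family (MM : R -> nat -> R) j k := INR j.+1 ^ k * MM (INR j.+1) k.

Section ScaledFamily.
Context {MM : R -> nat -> R} (HMM : weight_matrix MM).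

Let INR_succ_ge1 j : 1 <= INR j.+1.
Proof. by rewrite S_INR; have := pos_INR j; lra. Qed.

Let MM_pos lam : 0 < lam -> forall p, 0 < MM lam p.
Proof. by move=> lam_pos; apply: weight_seq_pos; apply: (proj1 HMM). Qed.

Lemma weight_sequence_scaled_family j : weight_sequence (scaled_family MM j).
Proof.
apply: weight_sequence_scale (INR_succ_ge1 j); apply: (proj1 HMM).
by have := INR_succ_ge1 j; lra.
Qed.

Lemma quasianalytic_scaled_family : quasianalytic_matrix MM ->
  forall j, quasianalytic (scaled_family MM j).
Proof.
move=> MM_quasi j; have := INR_succ_ge1 j => j_ge1.
by apply: quasianalytic_scale; [apply: MM_pos | | apply: MM_quasi]; lra.
Qed.

Lemma scaled_family_ge c lam j k : 0 < c -> 0 < lam ->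
  c <= INR j.+1 -> lam <= INR j.+1 -> c ^ k * MM lam k <= scaled_family MM j k.
Proof.
move=> c_pos lam_pos c_le lam_le; apply: Rmult_le_compat.
- by apply: pow_le; lra.
- exact/Rlt_le/MM_pos.
- by apply: pow_incr; lra.
- exact: (proj2 HMM).
Qed.

Lemma scaled_family_incr j k : scaled_family MM j k <= scaled_family MM j.+1 k.
Proof.
have := INR_succ_ge1 j => j_ge1.
by apply: scaled_family_ge; rewrite ?[INR j.+2]S_INR; lra.
Qed.

Lemma lhd_of_dominating_scaled_family L :
  (forall j, exists K, forall k, (K <= k)%N -> scaled_family MM j k <= L k) ->
  forall lam, 0 < lam -> lhd (MM lam) L.
Proof.
move=> L_dom lam lam_pos; apply: lhd_of_dominated => [|c c_pos]; first exact: MM_pos.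
have [j Hj] := INR_unbounded (Rmax lam c); have [K HK] := L_dom j.
exists K => k /HK; apply: Rle_trans; apply: scaled_family_ge => //;
  by have := Rmax_l lam c; have := Rmax_r lam c; rewrite S_INR; lra.
Qed.

End ScaledFamily.

Theorem mainTheorem9 (MM : R -> nat -> R) :
  weight_matrix MM -> quasianalytic_matrix MM ->
  exists L : nat -> R,
    weight_sequence L /\ quasianalytic L /\
    (forall lam, 0 < lam -> lhd (MM lam) L) /\
    (forall (r : nat) (U : vec r -> Prop),
        open_vec U -> (exists x, U x) ->
        forall f, E_roumieu_matrix MM U f -> E_beurling L U f).
Proof.
move=> HMM MM_quasi.
have [L [L_weight [L_quasi L_dom]]] := quasianalytic_dominating_sequence
  (scaled_family MM) (weight_sequence_scaled_family HMM)
  (quasianalytic_scaled_family HMM MM_quasi) (scaled_family_incr HMM).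
have L_lhd := lhd_of_dominating_scaled_family HMM _ L_dom.
exists L; do 3 (split => //).
move=> r U _ _ f; apply: E_roumieu_matrix_sub_beurling => //.
- by move=> lam lam_pos; apply: weight_seq_pos; apply: (proj1 HMM).
- exact: weight_seq_pos L_weight.
Qed.
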